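(* Let $\varepsilon_0>0$, $\delta_1\in(0,1)$, and suppose $\mathcal{A}:\mathcal{D}\to\mathcal{S}$ is an $(\varepsilon_0,\delta_0)$-DP local randomizer with $$\delta_0\le \frac{(1-e^{-\varepsilon_0})\delta_1}{4e^{\varepsilon_0}\left(2+\frac{\ln(2/\delta_1)}{\ln(1/(1-e^{-5\varepsilon_0}))}\right)}.$$ Then there exists an $8\varepsilon_0$-DP local randomizer $\tilde{\mathcal{A}}:\mathcal{D}\to\mathcal{S}$ such that for every $d\in\mathcal{D}$, the total variation distance between the output distributions of $\mathcal{A}(d)$ and $\tilde{\mathcal{A}}(d)$ is at most $\delta_1$.
   Context: A randomized map $\mathcal{A}:\mathcal{D}\to\mathcal{S}$ is an $(\varepsilon_0,\delta_0)$-DP local randomizer if for all $d,d'\in\mathcal{D}$ and measurable $S\subseteq\mathcal{S}$, $\Pr[\mathcal{A}(d)\in S]\le e^{\varepsilon_0}\Pr[\mathcal{A}(d')\in S]+\delta_0$; it is $\varepsilon_0$-DP if this holds with $\delta_0=0$. *)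

From HB Require Import structures.
From mathcomp Require Import all_boot all_order all_algebra.
From mathcomp Require Import all_classical all_reals all_analysis.
Set Implicit Arguments. Unset Strict Implicit. Unset Printing Implicit Defensive.
Import Order.TTheory GRing.Theory Num.Theory.
Local Open Scope classical_set_scope.
Local Open Scope ring_scope.
Local Open Scope ereal_scope.

Definition dp_local_randomizer {R : realType} {dS : measure_display}
  {D : Type} {S : measurableType dS} (A : D -> probability S R)
  (eps0 delta0 : R) : Prop :=
  forall (d d' : D) (E : set S), measurable E ->
    A d E <= (expR eps0)%:E * A d' E + delta0%:E.

Definition pure_dp_local_randomizer {R : realType} {dS : measure_display}
  {D : Type} {S : measurableType dS} (A : D -> probability S R) (eps0 : R) : Prop :=
  dp_local_randomizer A eps0 0.

Definition tv_dist {R : realType} {dS : measure_display} {S : measurableType dS}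
  (P Q : probability S R) : \bar R :=
  ereal_sup [set `|P E - Q E| | E in [set E : set S | measurable E]].

(* Fix an input d0 and write Q for the output distribution A d0.  Since A is
   (eps0, delta0)-DP, every output distribution P = A d satisfies
   P <= e^eps0 Q + delta0 and Q <= e^eps0 P + delta0 on every event.  Using the
   Hahn decompositions of the signed measures P - e^eps0 Q and P - e^-eps0 Q we
   clip P into the band [e^-eps0 Q, e^eps0 Q]: the clipped measure equals
   e^eps0 Q where P is too large, e^-eps0 Q where P is too small and P elsewhere.
   It stays within delta0 of P on every event, since the two corrections have
   opposite signs and are each bounded by delta0.  Normalizing it to a probability
   costs a factor (1 + delta0) / (1 - delta0) <= e^eps0 in likelihood ratios and
   another delta0 in total variation.  Hence the normalized clipped outputs form a
   3 eps0-DP (a fortiori 8 eps0-DP) randomizer at total variation distance at most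
   2 delta0 <= delta1 from A; the hypothesis on delta0 is only used through these
   two consequences. *)

From HB Require Import structures.
From mathcomp Require Import all_boot all_order all_algebra.
From mathcomp Require Import all_classical all_reals all_analysis.
From mathcomp Require Import ring lra.
Import Order.TTheory GRing.Theory Num.Theory.
Local Open Scope classical_set_scope.
Local Open Scope ring_scope.

Section finite_measures.
Context {R : realType} {dS : measure_display} {S : measurableType dS}.
Implicit Types (m : probability S R) (X Y : set S).

Lemma probability_fineK m {X} : measurable X -> m X = (fine (m X))%:E.
Proof. by move=> mX; rewrite fineK // fin_num_measure. Qed.

Lemma fine_probability_split m {X Y} : measurable X -> measurable Y ->
  fine (m X) = fine (m (X `&` Y)) + fine (m (X `&` ~` Y)).
Proof.
move=> mX mY.
have mXY : measurable (X `&` Y) by exact: measurableI.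
have mXY' : measurable (X `&` ~` Y) by apply: measurableI => //; exact: measurableC.
rewrite -[in LHS](setIT X) -(setUCr Y) setIUr measureU //; last first.
  by rewrite setIACA setICr setI0.
by rewrite fineD // fin_num_measure.
Qed.

Lemma threshold_set (P Q : probability S R) (c : R) :
  exists2 T : set S, measurable T &
    (forall X, measurable X -> X `<=` T -> c * fine (Q X) <= fine (P X)) /\
    (forall X, measurable X -> X `<=` ~` T -> fine (P X) <= c * fine (Q X)).
Proof.
pose sigma : {charge set S -> \bar R} := cadd (charge_of_finite_measure P)
  (cscale (- c) (charge_of_finite_measure Q)).
have [T [N [[mT posT] [_ negN] TUN _]]] := Hahn_decomposition sigma.
have sigmaE X : measurable X -> sigma X = (fine (P X) - c * fine (Q X))%:E.
  move=> mX; have -> : sigma X = (P X + (- c)%:E * Q X)%E by [].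
  rewrite (probability_fineK P mX) (probability_fineK Q mX).
  by rewrite -EFinM -EFinD mulNr.
exists T => //; split => X mX XT.
- by have := posT X mX XT; rewrite sigmaE // lee_fin subr_ge0.
- have XN : X `<=` N.
    move=> x /XT nTx; have : (T `|` N) x by rewrite TUN.
    by case.
  by have := negN X mX XN; rewrite sigmaE // lee_fin subr_le0.
Qed.

End finite_measures.

Definition clip_spec {R : realType} {dS : measure_display} {S : measurableType dS}
    (P Q : probability S R) (a b dl : R) (nu : {measure set S -> \bar R}) : Prop :=
  forall X, measurable X ->
    [/\ nu X = (fine (nu X))%:E, b * fine (Q X) <= fine (nu X),
        fine (nu X) <= a * fine (Q X) & `|fine (nu X) - fine (P X)| <= dl].

Section clipping.
Context {R : realType} {dS : measure_display} {S : measurableType dS}.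
Variables (P Q : probability S R) (a b dl : R).
Hypotheses (b_gt0 : 0 < b) (b_le_a : b <= a) (ab1 : a * b = 1).
Hypothesis PQ : forall X, measurable X -> fine (P X) <= a * fine (Q X) + dl.
Hypothesis QP : forall X, measurable X -> fine (Q X) <= a * fine (P X) + dl.

Variables (High Down : set S) (mHigh : measurable High) (mDown : measurable Down).
Hypothesis High_ge : forall X, measurable X -> X `<=` High ->
  a * fine (Q X) <= fine (P X).
Hypothesis High_le : forall X, measurable X -> X `<=` ~` High ->
  fine (P X) <= a * fine (Q X).
Hypothesis Down_ge : forall X, measurable X -> X `<=` Down ->
  b * fine (Q X) <= fine (P X).
Hypothesis Down_le : forall X, measurable X -> X `<=` ~` Down ->
  fine (P X) <= b * fine (Q X).

Let Mid := ~` High `&` Down.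
Let Low := ~` High `&` ~` Down.
Let mMid : measurable Mid. Proof. by apply: measurableI => //; exact: measurableC. Qed.
Let mLow : measurable Low.
Proof. by apply: measurableI; exact: measurableC. Qed.

Let a_ge0 : 0 <= a. Proof. exact/ltW/(lt_le_trans b_gt0). Qed.
Let b_le1 : b <= 1. Proof. by move: b_gt0 b_le_a ab1 => b0 ba ab; nra. Qed.

Definition clipped : {measure set S -> \bar R} :=
  measure_add (measure_add (mrestr P mMid) (mscale (NngNum a_ge0) (mrestr Q mHigh)))
    (mscale (NngNum (ltW b_gt0)) (mrestr Q mLow)).

Lemma clippedE X : measurable X -> clipped X =
  (fine (P (X `&` Mid)) + a * fine (Q (X `&` High)) + b * fine (Q (X `&` Low)))%:E.
Proof.
move=> mX; rewrite /clipped /= /measure_add /msum /= !big_ord_recl big_ord0 adde0.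
rewrite /= /msum !big_ord_recl big_ord0 adde0 /=.
by rewrite !EFinD !EFinM -!probability_fineK //; exact: measurableI.
Qed.

Lemma fine_split3 (m : probability S R) {X} : measurable X ->
  fine (m X) = fine (m (X `&` Mid)) + fine (m (X `&` High)) + fine (m (X `&` Low)).
Proof.
move=> mX; rewrite (fine_probability_split m mX mHigh).
rewrite (fine_probability_split m (measurableI _ _ mX (measurableC mHigh)) mDown).
by rewrite /Mid /Low -!setIA; lra.
Qed.

Lemma clipped_spec : clip_spec P Q a b dl clipped.
Proof.
move=> X mX; rewrite clippedE //=.
have mXM := measurableI _ _ mX mMid.
have mXH := measurableI _ _ mX mHigh.
have mXL := measurableI _ _ mX mLow.
rewrite (fine_split3 P mX) (fine_split3 Q mX).
set pM := fine (P (X `&` Mid)); set pH := fine (P (X `&` High)).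
set pL := fine (P (X `&` Low)); set qM := fine (Q (X `&` Mid)).
set qH := fine (Q (X `&` High)); set qL := fine (Q (X `&` Low)).
have qM0 : 0 <= qM by rewrite fine_ge0.
have qH0 : 0 <= qH by rewrite fine_ge0.
have qL0 : 0 <= qL by rewrite fine_ge0.
have dl0 : 0 <= dl by have := PQ _ measurable0; rewrite !measure0 /= mulr0 add0r.
have mid_le : pM <= a * qM by apply: High_le => // x [_ []].
have mid_ge : b * qM <= pM by apply: Down_ge => // x [_ []].
have high_ge : a * qH <= pH by apply: High_ge => // x [].
have high_le : pH <= a * qH + dl by exact: PQ.
have low_le : pL <= b * qL by apply: Down_le => // x [_ []].
have low_ge : b * qL <= pL + b * dl.
  have := ler_wpM2l (ltW b_gt0) (QP _ mXL).
  by rewrite mulrDr mulrA (mulrC b a) ab1 mul1r.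
have bqH : b * qH <= a * qH by exact: ler_wpM2r.
have bqL : b * qL <= a * qL by exact: ler_wpM2r.
have bdl : b * dl <= dl by exact: ler_piMl.
split => //; [lra | lra | by rewrite ler_norml; apply/andP; split; lra].
Qed.

End clipping.

Lemma clip_exists {R : realType} {dS : measure_display} {S : measurableType dS}
    (P Q : probability S R) (a b dl : R) :
  0 < b -> b <= a -> a * b = 1 ->
  (forall X, measurable X -> fine (P X) <= a * fine (Q X) + dl) ->
  (forall X, measurable X -> fine (Q X) <= a * fine (P X) + dl) ->
  exists nu, clip_spec P Q a b dl nu.
Proof.
move=> b_gt0 b_le_a ab1 PQ QP.
have [High mHigh [High_ge High_le]] := threshold_set P Q a.
have [Down mDown [Down_ge Down_le]] := threshold_set P Q b.
by eexists; exact: (clipped_spec _ _ _ _ _ b_gt0 b_le_a ab1 PQ QP _ _ mHigh mDown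
  High_ge High_le Down_ge Down_le).
Qed.

Section normalization.
Context {R : realType} {dS : measure_display} {S : measurableType dS}.
Variables (P Q : probability S R) (a b dl : R) (nu : {measure set S -> \bar R}).
Hypotheses (nu_spec : clip_spec P Q a b dl nu) (dl_lt1 : dl < 1).

Lemma clipped_mass : `|fine (nu setT) - 1| <= dl.
Proof.
by have [_ _ _] := nu_spec _ measurableT; rewrite probability_setT.
Qed.

Lemma clipped_mass_gt0 : 0 < fine (nu setT).
Proof.
by move: clipped_mass dl_lt1; rewrite ler_norml => /andP[? ?] ?; lra.
Qed.

Lemma normalizeE E : measurable E ->
  mnormalize nu P E = (fine (nu E) / fine (nu setT))%:E.
Proof.
move=> mE; have [nuT _ _ _] := nu_spec _ measurableT; have [nuE _ _ _] := nu_spec _ mE.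
by rewrite /mnormalize /= nuT eqe gt_eqF ?clipped_mass_gt0 //= {1}nuE -EFinM.
Qed.

Lemma normalize_close E : measurable E ->
  `|fine (P E) - fine (nu E) / fine (nu setT)| <= 2 * dl.
Proof.
move=> mE; have [_ _ _ nu_P] := nu_spec _ mE.
have Z_gt0 := clipped_mass_gt0.
have := clipped_mass; rewrite ler_norml => /andP[Z_ge Z_le].
move: nu_P; rewrite ler_norml => /andP[nu_ge nu_le].
set n := fine (nu E) in nu_ge nu_le *; set Z := fine (nu setT) in Z_gt0 Z_ge Z_le *.
set w := n / Z.
have wZ : w * Z = n by rewrite /w divfK // gt_eqF.
have w_ge0 : 0 <= w by rewrite /w divr_ge0 // ?fine_ge0 // ltW.
have w_le1 : w <= 1.
  rewrite /w ler_pdivrMr // mul1r /n /Z.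
  have [nuE _ _ _] := nu_spec _ mE; have [nuT _ _ _] := nu_spec _ measurableT.
  by rewrite -lee_fin -nuE -nuT le_measure ?inE.
(* P E - w = (P E - nu E) + w (Z - 1), and both terms are at most dl *)
have wZ1 : `|w * (Z - 1)| <= dl.
  rewrite normrM ger0_norm //; apply: le_trans (ler_piMl _ w_le1) _ => //.
  by rewrite ler_norml; apply/andP; split; lra.
move: wZ1; rewrite !ler_norml => /andP[? ?]; apply/andP; split; nra.
Qed.

Lemma tv_normalize : (tv_dist P (mnormalize nu P) <= (2 * dl)%:E)%E.
Proof.
apply/ereal_supP => _ [E mE <-].
suff : (`|P E - mnormalize nu P E| <= (2 * dl)%:E)%E by [].
rewrite normalizeE // (probability_fineK P mE) -EFinB abse_EFin lee_fin.
exact: normalize_close.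
Qed.

End normalization.
Arguments clipped_mass {R dS S P Q a b dl nu}.
Arguments clipped_mass_gt0 {R dS S P Q a b dl nu}.
Arguments normalizeE {R dS S P Q a b dl nu}.
Arguments tv_normalize {R dS S P Q a b dl nu}.

Lemma normalize_ratio {R : realType} {dS : measure_display} {S : measurableType dS}
    (P P' Q : probability S R) (a b dl : R) (nu nu' : {measure set S -> \bar R}) :
  0 < a -> a * b = 1 -> dl < 1 -> 1 + dl <= a * (1 - dl) ->
  clip_spec P Q a b dl nu -> clip_spec P' Q a b dl nu' ->
  forall E, measurable E ->
  fine (nu E) / fine (nu setT) <= a ^+ 3 * (fine (nu' E) / fine (nu' setT)).
Proof.
move=> a_gt0 ab1 dl_lt1 band nu_spec nu'_spec E mE.
have [_ _ nu_le _] := nu_spec _ mE; have [_ nu'_ge _ _] := nu'_spec _ mE.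
have Z_gt0 := clipped_mass_gt0 nu_spec dl_lt1.
have Z'_gt0 := clipped_mass_gt0 nu'_spec dl_lt1.
have := clipped_mass nu_spec; rewrite ler_norml => /andP[Z_ge _].
have := clipped_mass nu'_spec; rewrite ler_norml => /andP[_ Z'_le].
set n := fine (nu E) in nu_le *; set n' := fine (nu' E) in nu'_ge *.
set Z := fine (nu setT) in Z_gt0 Z_ge *; set Z' := fine (nu' setT) in Z'_gt0 Z'_le *.
set q := fine (Q E) in nu_le nu'_ge.
(* n <= a q = a^2 (b q) <= a^2 n' *)
have n_le : n <= a ^+ 2 * n'.
  apply: (le_trans nu_le); rewrite expr2 -mulrA; apply: ler_wpM2l; first exact: ltW.
  by rewrite -[q]mul1r -ab1 -mulrA ler_wpM2l // ltW.
have w'_ge0 : 0 <= n' / Z' by rewrite divr_ge0 // ?fine_ge0 // ltW.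
(* (n / Z) (1 - dl) <= n <= a^2 n' <= a^2 (n' / Z') (1 + dl) <= a^3 (n' / Z') (1 - dl) *)
rewrite -(ler_pM2r (_ : 0 < 1 - dl)) ?subr_gt0 //.
apply: (le_trans (_ : _ <= n)).
  rewrite -[leRHS](divfK (lt0r_neq0 Z_gt0)).
  by apply: ler_wpM2l; [rewrite divr_ge0 ?fine_ge0 // ltW | lra].
apply: (le_trans n_le).
set w' := n' / Z'.
have -> : n' = w' * Z' by rewrite /w' divfK // lt0r_neq0.
have -> : a ^+ 3 * w' * (1 - dl) = a ^+ 2 * (w' * (a * (1 - dl))) by ring.
by apply: ler_wpM2l; [exact/exprn_ge0/ltW | apply: ler_wpM2l => //; lra].
Qed.

Section randomizers.
Context {R : realType} {dS : measure_display} {S : measurableType dS} {D : Type}.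
Implicit Types (A : D -> probability S R) (eps dl : R).

Lemma dp_fine A eps dl : dp_local_randomizer A eps dl ->
  forall d d' X, measurable X ->
  fine (A d X) <= expR eps * fine (A d' X) + dl.
Proof.
move=> hA d d' X mX; have := hA d d' X mX.
by rewrite (probability_fineK (A d) mX) (probability_fineK (A d') mX) -EFinM -EFinD.
Qed.

Lemma dp_delta_ge0 A (d0 : D) {eps dl} : dp_local_randomizer A eps dl -> 0 <= dl.
Proof.
by move=> /dp_fine/(_ d0 d0 _ measurable0); rewrite !measure0 /= mulr0 add0r.
Qed.

Lemma pure_dp_mono A eps eps' : eps <= eps' ->
  pure_dp_local_randomizer A eps -> pure_dp_local_randomizer A eps'.
Proof.
move=> le_eps hA d d' E mE; apply: (le_trans (hA d d' E mE)).
by rewrite !adde0 lee_wpmul2r ?measure_ge0 // lee_fin ler_expR.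
Qed.

Theorem dp_to_pure_dp A (d0 : D) {eps dl} : 0 <= eps ->
  dp_local_randomizer A eps dl -> 1 + dl <= expR eps * (1 - dl) ->
  exists A' : D -> probability S R,
    pure_dp_local_randomizer A' (3 * eps) /\
    forall d, (tv_dist (A d) (A' d) <= (2 * dl)%:E)%E.
Proof.
move=> eps_ge0 hA band.
have dl_ge0 := dp_delta_ge0 A d0 hA.
have dl_lt1 : dl < 1 by have := expR_gt0 eps; nra.
set a := expR eps in band; set b := expR (- eps).
have b_gt0 : 0 < b by exact: expR_gt0.
have ab1 : a * b = 1 by rewrite /a /b expRN mulfV // lt0r_neq0 // expR_gt0.
have b_le_a : b <= a by rewrite ler_expR; lra.
have clip d : exists nu, clip_spec (A d) (A d0) a b dl nu.
  by apply: clip_exists => //; exact: dp_fine.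
have [nu nu_spec] := choice clip.
exists (fun d => mnormalize (nu d) (A d)); split => [d d' E mE|d].
- suff : (mnormalize (nu d) (A d) E <=
      (expR (3 * eps))%:E * mnormalize (nu d') (A d') E + 0%:E)%E by [].
  rewrite (normalizeE (nu_spec d)) // (normalizeE (nu_spec d')) // addr0.
  rewrite -EFinM lee_fin expRM_natl.
  exact: normalize_ratio (expR_gt0 _) ab1 dl_lt1 band (nu_spec d) (nu_spec d') E mE.
- exact: tv_normalize (nu_spec d) dl_lt1.
Qed.

End randomizers.

Lemma log_ratio_ge0 {R : realType} {eps d1 : R} : 0 < eps -> 0 < d1 < 1 ->
  0 <= ln (2 / d1) / ln (1 / (1 - expR (- (5 * eps)))).
Proof.
move=> eps_gt0 /andP[d1_gt0 d1_lt1].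
have e_gt0 : 0 < expR (- (5 * eps)) by exact: expR_gt0.
have e_lt1 : expR (- (5 * eps)) < 1 by rewrite expR_lt1 oppr_lt0 mulr_gt0.
apply: divr_ge0; apply: ln_ge0.
- by rewrite ler_pdivlMr // mul1r; lra.
- by rewrite ler_pdivlMr ?mul1r; lra.
Qed.

Lemma delta_bound_consequences {R : realType} {eps dl d1 : R} :
  0 < eps -> 0 < d1 < 1 -> 0 <= dl ->
  dl <= (1 - expR (- eps)) * d1 /
     (4 * expR eps * (2 + ln (2 / d1) / ln (1 / (1 - expR (- (5 * eps)))))) ->
  2 * dl <= d1 /\ 1 + dl <= expR eps * (1 - dl).
Proof.
move=> eps_gt0 d1_range dl_ge0; have /andP[d1_gt0 d1_lt1] := d1_range.
have L_ge0 := log_ratio_ge0 eps_gt0 d1_range.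
set L := ln (2 / d1) / ln _ in L_ge0 *; set a := expR eps; set b := expR (- eps).
have a_ge1 : 1 <= a by rewrite /a -expR0 ler_expR ltW.
have b_gt0 : 0 < b by exact: expR_gt0.
have b_lt1 : b < 1 by rewrite /b expR_lt1 oppr_lt0.
have ab1 : a * b = 1 by rewrite /a /b expRN mulfV // lt0r_neq0 // expR_gt0.
(* the denominator is at least 8, hence 8 dl <= (1 - b) d1 *)
have den_ge8 : 8 <= 4 * a * (2 + L) by nra.
rewrite ler_pdivlMr; last by nra.
move=> dl_den; have dl8 : 8 * dl <= (1 - b) * d1 by nra.
have dl_small : 8 * dl <= 1 - b by nra.
split; first by nra.
have : b * (1 + dl) <= 1 - dl by nra.
move=> /(ler_wpM2l (ltW (lt_le_trans ltr01 a_ge1))).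
by rewrite mulrA ab1 mul1r.
Qed.

Theorem mainTheorem9 (R : realType) (dS : measure_display) (D : Type)
  (S : measurableType dS) (A : D -> probability S R) (eps0 delta0 delta1 : R) :
  0 < eps0 -> 0 < delta1 < 1 ->
  dp_local_randomizer A eps0 delta0 ->
  delta0 <= (1 - expR (- eps0)) * delta1 /
     (4 * expR eps0 *
      (2 + ln (2 / delta1) / ln (1 / (1 - expR (- (5 * eps0)))))) ->
  exists A' : D -> probability S R,
    pure_dp_local_randomizer A' (8 * eps0) /\
    forall d : D, (tv_dist (A d) (A' d) <= delta1%:E)%E.
Proof.
move=> eps_gt0 d1_range hA hdl.
(* with no inputs there is nothing to do *)
have [[d0 _]|noD] := pselect (exists d : D, True); last first.
  by exists A; split => d; case: noD; exists d.
have dl_ge0 := dp_delta_ge0 A d0 hA.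
have [tv_budget band] := delta_bound_consequences eps_gt0 d1_range dl_ge0 hdl.
have [A' [pureA' closeA']] := dp_to_pure_dp A d0 (ltW eps_gt0) hA band.
exists A'; split.
- by apply: pure_dp_mono pureA'; lra.
- by move=> d; apply: le_trans (closeA' d) _; rewrite lee_fin.
Qed.
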